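(* Let $n$ be a positive integer and $N$ an even non-negative integer. Then $N$ has a potentially connected graphical partition with exactly $n$ parts if and only if $N$ has a forcibly connected graphical partition with exactly $n$ parts.
   Context: A partition of an integer $N$ is a non-increasing sequence of positive integers summing to $N$; its terms are its parts. A partition is graphical if it is the vertex degree sequence of some simple graph (finite, undirected, no loops or multiple edges); such a graph is a realization. A graphical partition is potentially connected if at least one of its realizations is connected, and forcibly connected if all of its realizations are connected. *)

From mathcomp Require Import all_boot.
Set Implicit Arguments. Unset Strict Implicit. Unset Printing Implicit Defensive.

Definition is_partition (N : nat) (d : seq nat) : bool :=
  [&& sorted geq d, all (fun x => 0 < x) d & sumn d == N].

Definition simple_graph (n : nat) (e : rel 'I_n) : Prop :=
  symmetric e /\ irreflexive e.

Definition realizes (d : seq nat) (e : rel 'I_(size d)) : Prop :=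
  simple_graph e /\ forall i : 'I_(size d), #|[pred j | e i j]| = nth 0 d i.

Definition graph_connected (n : nat) (e : rel 'I_n) : Prop :=
  forall x y : 'I_n, connect e x y.

Definition graphical (d : seq nat) : Prop :=
  exists e : rel 'I_(size d), realizes e.

Definition potentially_connected (d : seq nat) : Prop :=
  graphical d /\ exists e : rel 'I_(size d), realizes e /\ graph_connected e.

Definition forcibly_connected (d : seq nat) : Prop :=
  graphical d /\ forall e : rel 'I_(size d), realizes e -> graph_connected e.

From mathcomp Require Import all_boot zify.

Set Implicit Arguments.
Unset Strict Implicit.
Unset Printing Implicit Defensive.

(* The degree sum N of a connected graph on n vertices satisfies
   2(n - 1) <= N <= n(n - 1), as the graph has a spanning tree and no loops.
   Conversely, every even N in that range is the degree sum of a threshold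
   graph on n vertices whose first vertex is adjacent to all others. Its
   degree sequence is a partition of N, and any realization of it has a
   vertex of degree n - 1, hence is connected. *)

Section SimpleGraphCounting.

Variables (T : finType) (e : rel T).

Definition arcs : {set T * T} := [set p | e p.1 p.2].

Lemma sum_card_adj : \sum_(x : T) #|[pred y | e x y]| = #|arcs|.
Proof.
under eq_bigr => x _ do rewrite -sum1_card.
rewrite pair_big_dep sum1dep_card.
by apply: eq_card => p; rewrite !inE.
Qed.

Lemma card_adj_le x : irreflexive e -> #|[pred y | e x y]| <= #|T|.-1.
Proof.
move=> e_irr; rewrite -(cardC1 x); apply: subset_leq_card.
by apply/subsetP => y; rewrite !inE; apply: contraTneq => ->; rewrite e_irr.
Qed.

Lemma card_arcs_le : irreflexive e -> #|arcs| <= #|T| * #|T|.-1.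
Proof.
move=> e_irr; rewrite -sum_card_adj -sum_nat_const leq_sum // => x _.
exact: card_adj_le.
Qed.

Lemma exists_descent_to_root r : (forall v, connect e v r) ->
  exists f : T -> nat, forall v, v != r -> exists2 u, e v u & f u < f v.
Proof.
move=> conn.
pose reach_in v m := [exists p : m.-tuple T, path e v p && (last v p == r)].
have reach_ex v : exists m, reach_in v m.
  case/connectP: (conn v) => p ep lastp; exists (size p).
  by apply/existsP; exists (in_tuple p); rewrite ep -lastp eqxx.
exists (fun v => ex_minn (reach_ex v)) => v vr.
case: ex_minnP => m /existsP[[p /eqP size_p] /andP[/= vp /eqP lastp]] _.
case: p size_p vp lastp => [|u p] /=; first by move=> _ _ vr_eq; rewrite vr_eq eqxx in vr.
move=> size_p /andP[evu up] lastp.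
exists u => //; case: ex_minnP => mu _ /(_ (size p)) min_u.
rewrite -size_p ltnS min_u //; apply/existsP.
by exists (in_tuple p); rewrite up lastp eqxx.
Qed.

Hypothesis e_sym : symmetric e.

(* Each vertex v other than r gives the two arcs between v and a neighbour
   with smaller f; no arc arises twice since f strictly decreases along it. *)
Lemma card_arcs_ge_descent r (f : T -> nat) :
  (forall v, v != r -> exists2 u, e v u & f u < f v) -> 2 * #|T|.-1 <= #|arcs|.
Proof.
move=> desc.
pose par v := odflt v [pick u | e v u && (f u < f v)].
have parP v : v != r -> e v (par v) && (f (par v) < f v).
  move=> /desc[u evu fu]; rewrite /par; case: pickP => [//|none].
  by have := none u; rewrite evu fu.
pose up := [set (v, par v) | v in [set~ r]].
pose down := [set (par v, v) | v in [set~ r]].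
have card_up : #|up| = #|T|.-1 by rewrite card_imset ?cardsC1 // => x y [].
have card_down : #|down| = #|T|.-1 by rewrite card_imset ?cardsC1 // => x y [].
have up_down : up :&: down = set0.
  apply/setP => p; rewrite !inE; apply/negP.
  case/andP=> /imsetP[v vr ->] /imsetP[w wr [vw wv]]; rewrite !inE in vr wr.
  case/andP: (parP v vr) => _; case/andP: (parP w wr) => _.
  by rewrite -vw -wv => /ltn_trans/[apply]; rewrite ltnn.
have sub : up :|: down \subset arcs.
  apply/subsetP => p; rewrite in_setU => /orP[] /imsetP[v vr ->]; rewrite !inE in vr *.
    by case/andP: (parP v vr).
  by rewrite e_sym; case/andP: (parP v vr).
have := subset_leq_card sub.
by rewrite cardsU up_down cards0 subn0 card_up card_down addnn -mul2n.
Qed.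

Lemma card_arcs_ge_connected : (forall x y, connect e x y) -> 2 * #|T|.-1 <= #|arcs|.
Proof.
move=> conn; have [-> // | /card_gt0P[r _]] := posnP #|T|.
have [f desc] := exists_descent_to_root (conn^~ r).
exact: card_arcs_ge_descent desc.
Qed.

Lemma connect_dominating z : irreflexive e ->
  #|[pred y | e z y]| = #|T|.-1 -> forall x y, connect e x y.
Proof.
move=> e_irr deg_z.
have adj_z y : y != z -> e z y.
  have sub : [pred y | e z y] \subset predC1 z.
    by apply/subsetP => t; rewrite !inE; apply: contraTneq => ->; rewrite e_irr.
  by move=> yz; have /subset_cardP/(_ y) := sub; rewrite cardC1 deg_z !inE yz => ->.
have to_z y : connect e y z.
  by have [-> // | yz] := eqVneq y z; apply: connect1; rewrite e_sym adj_z.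
move=> x y; apply: connect_trans (to_z x) _.
by rewrite (sym_connect_sym e_sym) to_z.
Qed.

End SimpleGraphCounting.

Lemma card_ord_count n (P : pred nat) : #|[pred j : 'I_n | P j]| = count P (iota 0 n).
Proof.
have -> : iota 0 n = index_iota 0 n by rewrite /index_iota subn0.
by rewrite -sum1_count big_mkord -sum1_card; apply: eq_bigl.
Qed.

Lemma card_ord_neq_ltn n i b : b <= n ->
  #|[pred j : 'I_n | (j != i :> nat) && (j < b)]| = b - (i < b).
Proof.
move=> le_bn; rewrite (card_ord_count n (predI (predC (pred1 i)) (fun j => j < 0 + b))).
rewrite -count_filter filter_iota_ltn //.
have := count_predC (pred1 i) (iota 0 b).
rewrite count_uniq_mem ?iota_uniq // mem_iota size_iota add0n leq0n /=; lia.
Qed.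

Lemma sumn_map_const_in (T : eqType) (f : T -> nat) c (t : seq T) :
  {in t, forall x, f x = c} -> sumn (map f t) = size t * c.
Proof.
elim: t => //= x t IH fc; rewrite fc ?mem_head // IH // => y yt.
by apply: fc; rewrite inE yt orbT.
Qed.

Lemma size_le_sumn d : all (fun x => 0 < x) d -> size d <= sumn d.
Proof. by elim: d => //= x d IH /andP[x_gt0 /IH]; lia. Qed.

Lemma realizes_sumn d (e : rel 'I_(size d)) : realizes e -> sumn d = #|arcs e|.
Proof.
case=> _ deg; rewrite -sum_card_adj sumnE (big_nth 0) big_mkord.
by apply: eq_bigr => i _; rewrite deg.
Qed.

Lemma potentially_connected_sumn_ge d :
  potentially_connected d -> 2 * (size d).-1 <= sumn d.
Proof.
case=> _ [e [real conn]]; rewrite (realizes_sumn real); case: real => [[e_sym _] _].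
by have := card_arcs_ge_connected e_sym conn; rewrite card_ord.
Qed.

Lemma graphical_sumn_le d : graphical d -> sumn d <= size d * (size d).-1.
Proof.
case=> e real; rewrite (realizes_sumn real); case: real => [[_ e_irr] _].
by have := card_arcs_le e_irr; rewrite card_ord.
Qed.

Lemma forcibly_connected_dominating d (z : 'I_(size d)) :
  graphical d -> nth 0 d z = (size d).-1 -> forcibly_connected d.
Proof.
move=> gr deg_z; split=> // e [[e_sym e_irr] deg] x y.
by apply: (connect_dominating (z := z) e_sym e_irr); rewrite deg deg_z card_ord.
Qed.

Lemma forcibly_connectedW d : forcibly_connected d -> potentially_connected d.
Proof. by case=> [[e real] conn]; split; [exists e | exists e; split; last exact: conn]. Qed.

Section ThresholdGraph.

Variables k r s : nat.

(* The threshold graph on k.+1 + r + s vertices in which vertex i is adjacent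
   to the j != i with j < threshold_reach i: the vertices below k dominate,
   vertex k is also joined to the r vertices after it, and the remaining
   vertices are joined only to the vertices up to k. *)
Definition threshold_reach (i : nat) : nat :=
  if i < k then k.+1 + r + s else if i == k then k.+1 + r
  else if i <= k + r then k.+1 else k.

Definition threshold_deg (i : nat) : nat :=
  if i < k then k + r + s else if i == k then k + r
  else if i <= k + r then k.+1 else k.

Definition threshold_seq : seq nat :=
  [seq threshold_deg i | i <- iota 0 (k.+1 + r + s)].

Definition threshold_rel {n : nat} : rel 'I_n :=
  fun i j => (j != i :> nat) && (j < threshold_reach i).

Lemma threshold_reach_le i : threshold_reach i <= k.+1 + r + s.
Proof. rewrite /threshold_reach; do !case: ifP; lia. Qed.

Lemma threshold_reach_sym i j : i < k.+1 + r + s -> j < k.+1 + r + s ->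
  (j != i) && (j < threshold_reach i) = (i != j) && (i < threshold_reach j).
Proof. rewrite /threshold_reach; do !case: ifP; lia. Qed.

Lemma threshold_degE i : i < k.+1 + r + s ->
  threshold_deg i = threshold_reach i - (i < threshold_reach i).
Proof. rewrite /threshold_deg /threshold_reach; do !case: ifP; lia. Qed.

Lemma threshold_deg_nonincreasing i j : i <= j -> threshold_deg j <= threshold_deg i.
Proof. rewrite /threshold_deg; do !case: ifP; lia. Qed.

Lemma size_threshold_seq : size threshold_seq = k.+1 + r + s.
Proof. by rewrite size_map size_iota. Qed.

Lemma nth_threshold_seq i : i < k.+1 + r + s -> nth 0 threshold_seq i = threshold_deg i.
Proof. by move=> lt_in; rewrite (nth_map 0) ?size_iota // nth_iota. Qed.

Lemma sumn_threshold_seq :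
  sumn threshold_seq = k * (k + r + s) + (k + r) + r * k.+1 + s * k.
Proof.
have deg_block a b c : {in iota a b, forall i, threshold_deg i = c} ->
    sumn [seq threshold_deg i | i <- iota a b] = b * c.
  by move/sumn_map_const_in; rewrite size_iota.
rewrite /threshold_seq -addn1 !iotaD !map_cat !sumn_cat /= !add0n.
rewrite (deg_block _ _ (k + r + s)) ?(deg_block _ r k.+1) ?(deg_block _ s k);
  try by move=> i; rewrite mem_iota /threshold_deg; do !case: ifP; lia.
rewrite /threshold_deg ltnn eqxx; lia.
Qed.

Lemma threshold_seq_partition : 0 < k -> is_partition (sumn threshold_seq) threshold_seq.
Proof.
move=> k_gt0; apply/and3P; split => //.
- rewrite sorted_map; apply: sub_sorted (iota_sorted 0 _) => i j /=.
  exact: threshold_deg_nonincreasing.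
- by apply/allP => _ /mapP[i _ ->]; rewrite /threshold_deg; do !case: ifP; lia.
Qed.

Lemma threshold_rel_realizes : @realizes threshold_seq threshold_rel.
Proof.
rewrite /realizes /simple_graph size_threshold_seq; split; first split.
- by move=> i j; rewrite /threshold_rel threshold_reach_sym.
- by move=> i; rewrite /threshold_rel eqxx.
move=> i; rewrite nth_threshold_seq // threshold_degE //.
by rewrite -(card_ord_neq_ltn (n := k.+1 + r + s)) ?threshold_reach_le.
Qed.

Lemma threshold_seq_forcibly_connected : 0 < k -> forcibly_connected threshold_seq.
Proof.
move=> k_gt0; have n_gt0 : 0 < size threshold_seq by rewrite size_threshold_seq.
apply: (forcibly_connected_dominating (z := Ordinal n_gt0)).
  by exists threshold_rel; exact: threshold_rel_realizes.
by rewrite (nth_threshold_seq (i := 0)) // size_threshold_seq /threshold_deg k_gt0 !addSn.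
Qed.

End ThresholdGraph.

(* Induction on m, one edge at a time: join vertex k to one more vertex, or,
   once k dominates, move on to vertex k.+1 (impossible only when r <= 1 and
   s = 0, i.e. when the graph is already complete). *)
Lemma threshold_params n m : 1 < n -> n.-1 <= m -> m.*2 <= n * n.-1 ->
  exists k r s, [/\ 0 < k, n = k.+1 + r + s & m.*2 = sumn (threshold_seq k r s)].
Proof.
move=> n_gt1; elim: m => [|m IH] lo hi; first lia.
have [m_eq | m_neq] := eqVneq m.+1 n.-1.
  by exists 1, 0, (n - 2); rewrite sumn_threshold_seq; split; lia.
have [k [r [s [k_gt0 n_eq]]]] := IH ltac:(lia) ltac:(lia).
rewrite sumn_threshold_seq; case: s n_eq => [|s] n_eq sum_eq; last first.
  by exists k, r.+1, s; rewrite sumn_threshold_seq; split; lia.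
case: r n_eq sum_eq => [|[|r]] n_eq sum_eq; try by subst n; nia.
by exists k.+1, 1, r; rewrite sumn_threshold_seq; split; subst n; nia.
Qed.

Theorem proposition1 (n N : nat) :
  0 < n -> ~~ odd N ->
  ((exists d : seq nat, [/\ is_partition N d, size d = n & potentially_connected d]) <->
   (exists d : seq nat, [/\ is_partition N d, size d = n & forcibly_connected d])).
Proof.
move=> n_gt0 N_even; split; last first.
  by case=> d [part size_d /forcibly_connectedW]; exists d.
case=> d [/and3P[_ pos /eqP sum_d] size_d pot].
have lo := potentially_connected_sumn_ge pot.
have hi := graphical_sumn_le pot.1.
have := size_le_sumn pos; rewrite sum_d size_d in lo hi * => n_le_N.
have N_half : N = (N./2).*2 by rewrite -[LHS]odd_double_half (negbTE N_even).
have [|||k [r [s [k_gt0 n_eq sum_eq]]]] := @threshold_params n N./2; try lia.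
exists (threshold_seq k r s); split.
- by rewrite N_half sum_eq threshold_seq_partition.
- by rewrite size_threshold_seq n_eq.
- exact: threshold_seq_forcibly_connected.
Qed.
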